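(* Let $G$, $\mathfrak{g}$, $\mu$, $H_0,\dots,H_M$ be as in the context and let $h>0$. The stochastic implicit midpoint integrator $\Phi_h:T^*G\to T^*G$, $(Q_n,P_n)\mapsto(Q_{n+1},P_{n+1})$, defined in the context is almost surely equivariant with respect to the action $g\cdot(Q,P)=(gQ,(g^{-1})^*P)$ of $G$ on $T^*G$, i.e. almost surely $\Phi_h(g\cdot(Q,P))=g\cdot\Phi_h(Q,P)$ for all $g\in G$ and $(Q,P)\in T^*G$.
   Context: $G\subseteq\operatorname{GL}(n,\mathbb{C})$ is a compact simply connected matrix Lie group with $J$-quadratic Lie algebra $\mathfrak{g}$: there is a matrix $J$ with $J^*=\pm J$, $J^2=cI_n$ ($c\in\mathbb{R}\setminus\{0\}$) and $A^*J+JA=0$ for all $A\in\mathfrak{g}$ ($A^*$ = conjugate transpose). $\mathfrak{g}^*$ is identified with $\mathfrak{g}$ via $\langle X,V\rangle=\operatorname{Tr}(X^*V)$, gradients are taken w.r.t. this inner product. The momentum map is $\mu(Q,P)=\tfrac12Q^*P-\tfrac1{2c}JP^*QJ$. $H_0,\dots,H_M:\mathfrak{g}^*\to\mathbb{R}$ are differentiable Hamiltonians. Set $f_i(Q,P)=\tfrac12Q\nabla H_i(\mu(Q,P))$ and $k_i(Q,P)=-\tfrac12P\nabla H_i(\mu(Q,P))^*$, $i=0,\dots,M$. Truncated noise: for each $i$ and step $n$, let $\xi\sim\mathcal N(0,1)$ with $\xi\sqrt h=W^i(t_n+h)-W^i(t_n)$ ($W^i$ independent Brownian motions), let $A_h=\sqrt{2l|\log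 h|}$ for a fixed positive integer $l$, and let $(\zeta_i)_n=A_h$ if $\xi>A_h$, $-A_h$ if $\xi<-A_h$, $\xi$ otherwise. The integrator $\Phi_h=\Phi_h^{(2)}\circ\Phi_h^{(1)}$: given $(Q_n,P_n)$, $\Phi_h^{(1)}$ determines $(\tilde Q,\tilde P)$ implicitly from $Q_n=\tilde Q-\tfrac12\big(f_0(\tilde Q,\tilde P)h+\sum_{i=1}^M f_i(\tilde Q,\tilde P)(\zeta_i)_n\sqrt h\big)$, $P_n=\tilde P-\tfrac12\big(k_0(\tilde Q,\tilde P)h+\sum_{i=1}^M k_i(\tilde Q,\tilde P)(\zeta_i)_n\sqrt h\big)$, and $\Phi_h^{(2)}$ sets $Q_{n+1}=\tilde Q+\tfrac12\big(f_0(\tilde Q,\tilde P)h+\sum_{i} f_i(\tilde Q,\tilde P)(\zeta_i)_n\sqrt h\big)$, $P_{n+1}=\tilde P+\tfrac12\big(k_0(\tilde Q,\tilde P)h+\sum_{i} k_i(\tilde Q,\tilde P)(\zeta_i)_n\sqrt h\big)$. *)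

From HB Require Import structures.
From mathcomp Require Import all_boot all_order all_algebra.
From mathcomp Require Import all_classical all_reals all_analysis.
From mathcomp Require Import complex.
Set Implicit Arguments. Unset Strict Implicit. Unset Printing Implicit Defensive.
Import Order.TTheory GRing.Theory Num.Theory.
Local Open Scope ring_scope.
Local Open Scope complex_scope.

Section Defs.
Variables (R : realType) (n : nat).
Local Notation C := R[i].
Local Notation Mat := 'M[C]_n.

Definition adj (A : Mat) : Mat := (map_mx (@conjc R) A)^T.

Definition momentum (J : Mat) (c : R) (Q P : Mat) : Mat :=
  (1 / 2)%:C *: (adj Q *m P) - (1 / (2 * c))%:C *: (J *m adj P *m Q *m J).

(* gradH is the gradient of H on g w.r.t. the real inner product
   Re Tr(X^* V): for X in g, gradH X lies in g and for every V in g the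
   directional derivative of H at X along V equals Re Tr((gradH X)^* V). *)
Definition is_gradient_on (g : Mat -> Prop) (H : Mat -> R) (gradH : Mat -> Mat)
  : Prop :=
  forall X, g X ->
    g (gradH X) /\
    forall V, g V ->
      is_derive (0 : R) (1 : R) (fun t : R => H (X + t%:C *: V))
                (@complex.Re R (\tr (adj (gradH X) *m V))).

Definition fvec (J : Mat) (c : R) (gradH : Mat -> Mat) (Q P : Mat) : Mat :=
  (1 / 2)%:C *: (Q *m gradH (momentum J c Q P)).
Definition kvec (J : Mat) (c : R) (gradH : Mat -> Mat) (Q P : Mat) : Mat :=
  - ((1 / 2)%:C *: (P *m adj (gradH (momentum J c Q P)))).

Definition trunc (A x : R) : R := if A < x then A else if x < - A then - A else x.

Definition Ah (l : nat) (h : R) : R := Num.sqrt (2 * l%:R * `|ln h|).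

(* index 0 : drift H_0 ; index lift ord0 i (= i+1) : noise H_{i+1}, i < M *)
Definition increment (M : nat) (F : 'I_M.+1 -> Mat -> Mat -> Mat)
  (h : R) (zeta : 'I_M -> R) (Q P : Mat) : Mat :=
  h%:C *: F ord0 Q P
  + \sum_(i < M) (zeta i * Num.sqrt h)%:C *: F (lift ord0 i) Q P.

(* One step Phi_h = Phi_h^(2) o Phi_h^(1) of the stochastic implicit midpoint
   integrator, as a relation: (Qn,Pn) |-> (Qn1,Pn1) with intermediate
   (Qt,Pt) solving the implicit equations of Phi_h^(1); the noise is the
   truncated Gaussian  zeta_i = trunc(A_h, xi_i). *)
Definition midpoint_step (M : nat) (J : Mat) (c : R)
  (gradH : 'I_M.+1 -> Mat -> Mat) (l : nat) (h : R) (xi : 'I_M -> R)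
  (Qn Pn Qn1 Pn1 : Mat) : Prop :=
  let zeta := fun i => trunc (Ah l h) (xi i) in
  let dQ := increment (fun j => fvec J c (gradH j)) h zeta in
  let dP := increment (fun j => kvec J c (gradH j)) h zeta in
  exists Qt Pt : Mat,
    [/\ Qn = Qt - (1 / 2)%:C *: dQ Qt Pt,
        Pn = Pt - (1 / 2)%:C *: dP Qt Pt,
        Qn1 = Qt + (1 / 2)%:C *: dQ Qt Pt &
        Pn1 = Pt + (1 / 2)%:C *: dP Qt Pt].

End Defs.

(* The momentum map is invariant under the cotangent lift
   (Q, P) |-> (a Q, a^{-*} P) of any invertible a, because Q^* P and P^* Q
   are.  Hence the vector fields f_i and k_i transform linearly, as
   a f_i and a^{-*} k_i, and so do the increments of both half-steps.  Left
   multiplication by a (resp. a^{-*}) therefore maps a solution (Q~, P~) of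
   the implicit equations of the first half-step to a solution for the moved
   initial point, and the second half-step then lands on the moved endpoint. *)
From HB Require Import structures.
From mathcomp Require Import all_boot all_order all_algebra.
From mathcomp Require Import all_classical all_reals all_analysis.
From mathcomp Require Import complex.
Import Order.TTheory GRing.Theory Num.Theory.
Local Open Scope ring_scope.
Local Open Scope complex_scope.

Section CotangentLift.
Variables (R : realType) (n : nat).
Local Notation Mat := 'M[R[i]]_n.

Lemma adjM (A B : Mat) : adj (A *m B) = adj B *m adj A.
Proof. by rewrite /adj map_mxM trmx_mul. Qed.

Lemma adjK (A : Mat) : adj (adj A) = A.
Proof.
by rewrite /adj map_trmx trmxK -map_mx_comp map_mx_id // => z; exact: conjcK.
Qed.

Lemma adj1 : adj (1%:M : Mat) = 1%:M.
Proof. by rewrite /adj map_mx1 trmx1. Qed.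

Lemma mulmx_adj_invmx (a : Mat) : a \in unitmx -> adj a *m adj (invmx a) = 1%:M.
Proof. by move=> ua; rewrite -adjM mulVmx // adj1. Qed.

Lemma momentum_lift (J : Mat) (c : R) (a Q P : Mat) : a \in unitmx ->
  momentum J c (a *m Q) (adj (invmx a) *m P) = momentum J c Q P.
Proof.
move=> ua.
have QP : adj Q *m adj a *m (adj (invmx a) *m P) = adj Q *m P.
  by rewrite -mulmxA (mulmxA (adj a)) mulmx_adj_invmx // mul1mx.
have PQ : adj P *m invmx a *m (a *m Q) = adj P *m Q.
  by rewrite -mulmxA (mulmxA (invmx a)) mulVmx // mul1mx.
by rewrite /momentum !adjM adjK QP -(mulmxA J (adj P *m invmx a)) PQ mulmxA.
Qed.

Lemma fvec_lift (J : Mat) (c : R) (gradH : Mat -> Mat) (a Q P : Mat) :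
  a \in unitmx ->
  fvec J c gradH (a *m Q) (adj (invmx a) *m P) = a *m fvec J c gradH Q P.
Proof. by move=> ua; rewrite /fvec momentum_lift // -scalemxAr mulmxA. Qed.

Lemma kvec_lift (J : Mat) (c : R) (gradH : Mat -> Mat) (a Q P : Mat) :
  a \in unitmx ->
  kvec J c gradH (a *m Q) (adj (invmx a) *m P)
  = adj (invmx a) *m kvec J c gradH Q P.
Proof. by move=> ua; rewrite /kvec momentum_lift // mulmxN -scalemxAr mulmxA. Qed.

Lemma increment_mulmx (M : nat) (F : 'I_M.+1 -> Mat -> Mat -> Mat)
    (h : R) (zeta : 'I_M -> R) (a Q P Q' P' : Mat) :
  (forall j, F j Q' P' = a *m F j Q P) ->
  increment F h zeta Q' P' = a *m increment F h zeta Q P.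
Proof.
move=> FF'; rewrite /increment mulmxDr mulmx_sumr FF' scalemxAr.
by congr (_ + _); apply: eq_bigr => i _; rewrite FF' scalemxAr.
Qed.

Lemma midpoint_step_lift (M : nat) (J : Mat) (c : R)
    (gradH : 'I_M.+1 -> Mat -> Mat) (l : nat) (h : R) (xi : 'I_M -> R)
    (a Q P Q' P' : Mat) :
  a \in unitmx ->
  midpoint_step J c gradH l h xi Q P Q' P' ->
  midpoint_step J c gradH l h xi (a *m Q) (adj (invmx a) *m P)
                                 (a *m Q') (adj (invmx a) *m P').
Proof.
move=> ua [Qt [Pt [-> -> -> ->]]].
set zeta := fun i => trunc (Ah l h) (xi i).
have dQ := increment_mulmx M (fun j => fvec J c (gradH j)) h zeta a Qt Pt _ _
  (fun j => fvec_lift J c (gradH j) a Qt Pt ua).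
have dP := increment_mulmx M (fun j => kvec J c (gradH j)) h zeta
  (adj (invmx a)) Qt Pt _ _ (fun j => kvec_lift J c (gradH j) a Qt Pt ua).
exists (a *m Qt), (adj (invmx a) *m Pt).
rewrite dQ dP.
move: (increment _ h zeta Qt Pt) (increment _ h zeta Qt Pt) => dq dp.
by split; rewrite ?mulmxBr ?mulmxDr scalemxAr.
Qed.

End CotangentLift.

Theorem lemma4p2 (R : realType) (n M l : nat)
  (G : 'M[R[i]]_n -> Prop) (g : 'M[R[i]]_n -> Prop)
  (J : 'M[R[i]]_n) (c : R)
  (H : 'I_M.+1 -> 'M[R[i]]_n -> R) (gradH : 'I_M.+1 -> 'M[R[i]]_n -> 'M[R[i]]_n) :
  (forall A, G A -> A \in unitmx) ->
  G 1%:M ->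
  (forall A B, G A -> G B -> G (A *m B)) ->
  (forall A, G A -> G (invmx A)) ->
  (adj J = J \/ adj J = - J) ->
  c != 0 ->
  J *m J = c%:C%:M ->
  (forall A, g A -> adj A *m J + J *m A = 0) ->
  (forall j, is_gradient_on g (H j) (gradH j)) ->
  (0 < l)%N ->
  forall h : R, 0 < h ->
  forall xi : 'I_M -> R,
  forall (a Q P Q' P' : 'M[R[i]]_n),
    G a -> G Q ->
    midpoint_step J c gradH l h xi Q P Q' P' ->
    midpoint_step J c gradH l h xi (a *m Q) (adj (invmx a) *m P)
                                   (a *m Q') (adj (invmx a) *m P').
Proof.
move=> G_unit _ _ _ _ _ _ _ _ _ h _ xi a Q P Q' P' Ga _.
exact/midpoint_step_lift/G_unit.
Qed.
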